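(* Let $a,b,d<0$ and $c>0$ be real numbers with $c\le c^-$, and let $\{W_n(z)\}_{n\ge0}$ be the normalised sequence defined below. Then for every $n\ge1$ the polynomial $W_n(z)$ is real-rooted, and \[ |R_n^{J_1}|=\lfloor (n-1)/2\rfloor,\qquad |R_n^{J_2\cup J_3}|=\lfloor n/2\rfloor,\qquad |R_n^{J_4}|=1 . \] Moreover, \[ |R_n^{J_3}|=\begin{cases}1,&\text{if }\Delta_\Delta>\Delta_g\text{ and }n\ge n^+,\\ 0,&\text{otherwise.}\end{cases} \]
   Context: Let $a,b,c,d\in\mathbb{R}$ with $ac\ne0$, and put $A(z)=az+b$, $B(z)=cz+d$. The normalised sequence $\{W_n(z)\}_{n\ge0}$ is defined by $W_0(z)=1$, $W_1(z)=z$ and $W_n(z)=A(z)W_{n-1}(z)+B(z)W_{n-2}(z)$ for $n\ge2$; $W_n$ has degree $n$ with leading coefficient $a^{n-1}$. Notation (for $a,b,d<0<c$): - $\Delta_\Delta=-a^2d+abc+c^2$ (which is $>0$), and $x_\Delta^\pm=\dfrac{-ab-2c\pm2\sqrt{\Delta_\Delta}}{a^2}$ are the zeros of $\Delta(z)=A(z)^2+4B(z)=a^2z^2+(2ab+4c)z+(b^2+4d)$. - $g(z)=(1-a)z^2-(b+c)z-d$, $\Delta_g=(b+c)^2+4d(1-a)$, and $x_g^\pm=\dfrac{b+c\pm\sqrt{\Delta_g}}{2(1-a)}$ are the zeros of $g$. - $c^\pm=\pm2\sqrt{d(a-1)}-b$; then $x_g^\pm$ are real iff $c\le c^-$ or $c\ge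 c^+$. - $x_A=-b/a$, $x_B=-d/c$, $h(z)=(2-a)z-b$, and $n^+=-A(x_\Delta^+)/h(x_\Delta^+)$ (defined whenever $h(x_\Delta^+)\ne0$, which is the case when $\Delta_\Delta\neq\Delta_g$). - $J_1=(x_\Delta^-,x_A)$, $J_2=(x_A,x_\Delta^+)$, $J_3=[x_\Delta^+,x_g^-)$, $J_4=(x_g^+,0]$. - $R_n$ denotes the multiset of zeros of $W_n(z)$ (with multiplicity), and for an interval $J$, $R_n^J=R_n\cap J$; $|\cdot|$ is cardinality counted with multiplicity. A polynomial is real-rooted if all its zeros are real. *)

From HB Require Import structures.
From mathcomp Require Import all_boot all_order all_algebra.
Set Implicit Arguments. Unset Strict Implicit. Unset Printing Implicit Defensive.
Import Order.TTheory GRing.Theory Num.Theory.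
Local Open Scope ring_scope.

Section Defs.
Variable R : rcfType.
Variables a b c d : R.

Definition Apoly : {poly R} := a%:P * 'X + b%:P.
Definition Bpoly : {poly R} := c%:P * 'X + d%:P.

(* Wpair n = (W_n, W_{n+1}) *)
Fixpoint Wpair (n : nat) : {poly R} * {poly R} :=
  match n with
  | 0%N => (1, 'X)
  | k.+1 => let p := Wpair k in (p.2, Apoly * p.2 + Bpoly * p.1)
  end.

Definition W (n : nat) : {poly R} := (Wpair n).1.

Definition DeltaDelta : R := - a ^+ 2 * d + a * b * c + c ^+ 2.
Definition xDeltam : R := (- a * b - 2 * c - 2 * Num.sqrt DeltaDelta) / a ^+ 2.
Definition xDeltap : R := (- a * b - 2 * c + 2 * Num.sqrt DeltaDelta) / a ^+ 2.

Definition Deltag : R := (b + c) ^+ 2 + 4 * d * (1 - a).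
Definition xgm : R := (b + c - Num.sqrt Deltag) / (2 * (1 - a)).
Definition xgp : R := (b + c + Num.sqrt Deltag) / (2 * (1 - a)).

Definition cminus : R := - 2 * Num.sqrt (d * (a - 1)) - b.

Definition xA : R := - b / a.
Definition hfun (z : R) : R := (2 - a) * z - b.
Definition nplus : R := - (Apoly.[xDeltap]) / hfun xDeltap.

Definition inJ1 (x : R) : bool := (xDeltam < x) && (x < xA).
Definition inJ2 (x : R) : bool := (xA < x) && (x < xDeltap).
Definition inJ3 (x : R) : bool := (xDeltap <= x) && (x < xgm).
Definition inJ4 (x : R) : bool := (xgp < x) && (x <= 0).
End Defs.

(* s is the multiset of zeros (with multiplicity) of p, all real:
   p = lead_coef p * prod_{r in s} (X - r). *)
Definition zeros_list (R : rcfType) (p : {poly R}) (s : seq R) : Prop :=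
  p = lead_coef p *: \prod_(r <- s) ('X - r%:P).

Definition real_rooted (R : rcfType) (p : {poly R}) : Prop :=
  exists s : seq R, zeros_list p s.

(* On the negative axis B(z) = c z + d is negative, so the recurrence
   W_{n+1} = A W_n + B W_{n-1} forces W_{n+1} and W_{n-1} to have opposite signs at every
   zero of W_n.  Together with W_n(x_Delta^-) < 0, W_n(x) = x^n at x = x_g^- and x = x_g^+,
   and the alternating sign of W_n(0), this puts one zero of W_{n+1} in each gap of
   x_Delta^- < (the zeros of W_n in (x_Delta^-, x_g^-)) < x_g^-, and one more in (x_g^+, 0):
   these are all n + 1 zeros.  Under such an interlacing only the zero in the gap containing
   a point t can move across t, and the sign of W_{n+1}(t) decides whether it does.  For
   t = x_A that sign comes from W_{2k}(x_A) = B(x_A)^k and W_{2k+1}(x_A) = x_A B(x_A)^k, for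
   t = x_Delta^+ from W_{k+1}(x_Delta^+) = alpha^k ((k+1) x_Delta^+ - k alpha) with
   alpha = A(x_Delta^+)/2; this gives the four counts. *)

From Pilot Require Import Defs.
From HB Require Import structures.
From mathcomp Require Import all_boot all_order all_algebra.
From mathcomp Require Import ring lra zify polyrcf.
Set Implicit Arguments. Unset Strict Implicit. Unset Printing Implicit Defensive.
Import Order.TTheory GRing.Theory Num.Theory.
Local Open Scope ring_scope.

Section Counting.
Variable T : eqType.

Definition zeros_seq (n : nat) (zs : nat -> T) (y : T) : seq T := rcons (mkseq zs n) y.

Lemma count_mkseq_lt (q : pred T) (zs : nat -> T) n k : (k <= n)%N ->
  (forall i, (i < n)%N -> q (zs i) = (i < k)%N) -> count q (mkseq zs n) = k.
Proof.
move=> kn hq; rewrite count_map -size_filter.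
rewrite (@eq_in_filter _ _ (fun i => i < 0 + k)%N); last first.
  by move=> i; rewrite mem_iota /= => /hq.
by rewrite filter_iota_ltn // size_iota.
Qed.

Lemma count_mkseq_ge (q : pred T) (zs : nat -> T) n k : (k <= n)%N ->
  (forall i, (i < n)%N -> q (zs i) = (k <= i)%N) -> count q (mkseq zs n) = (n - k)%N.
Proof.
move=> kn hq; have := count_predC q (mkseq zs n).
rewrite (@count_mkseq_lt (predC q) _ _ k) // => [|i /hq /= ->]; last by rewrite -ltnNge.
by rewrite size_mkseq; lia.
Qed.

Lemma count_zeros_seq (q : pred T) n zs y :
  count q (zeros_seq n zs y) = (count q (mkseq zs n) + q y)%N.
Proof. by rewrite /zeros_seq -cats1 count_cat /= addn0. Qed.

End Counting.

Section Signs.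
Variable R : realDomainType.

Lemma sign_mul_lt0 (u v : nat) (x y : R) :
  0 < (-1) ^+ u * x -> 0 < (-1) ^+ v * y -> (x * y < 0) = odd (u + v).
Proof.
move=> hx hy; have := mulr_gt0 hx hy.
rewrite mulrACA -exprD -signr_odd; case: odd => /=.
  by rewrite expr1 mulN1r oppr_gt0 => ->.
by rewrite expr0 mul1r => /lt_gtF.
Qed.

Lemma sign_odd_eq (u v : nat) (x : R) :
  odd u = odd v -> (0 < (-1) ^+ u * x) = (0 < (-1) ^+ v * x).
Proof. by rewrite -signr_odd => ->; rewrite signr_odd. Qed.

Lemma sign_pow_lt0 (x : R) (n : nat) : x < 0 -> 0 < (-1) ^+ n * x ^+ n.
Proof. by move=> hx; rewrite -exprNn exprn_gt0 // oppr_gt0. Qed.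

Lemma sign_scale_pow_lt0 (u n : nat) (a x : R) : a < 0 ->
  (0 < (-1) ^+ u * (a ^+ n * x)) = (0 < (-1) ^+ (u + n) * x).
Proof.
move=> ha; rewrite -[a]opprK (exprNn (- a)) exprD.
have -> : (-1) ^+ u * ((-1) ^+ n * (- a) ^+ n * x) =
          (- a) ^+ n * ((-1) ^+ u * (-1) ^+ n * x) by ring.
by rewrite pmulr_rgt0 // exprn_gt0 // oppr_gt0.
Qed.

Lemma sign_prod_XsubC (s : seq R) (x : R) : x \notin s ->
  0 < (-1) ^+ count (fun r => x < r) s * \prod_(r <- s) (x - r).
Proof.
elim: s => [|r s IH]; first by rewrite big_nil expr0 mulr1 ltr01.
rewrite in_cons negb_or big_cons /= => /andP[xr /IH hs].
case: (ltgtP x r) xr => [hxr|hxr|->] //= _; rewrite ?add1n ?add0n.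
  rewrite exprS; set P := \prod_(_ <- _) _.
  have -> : -1 * (-1) ^+ count (> x) s * ((x - r) * P) = (-1) ^+ count (> x) s * P * (r - x)
    by ring.
  by rewrite mulr_gt0 // subr_gt0.
by rewrite mulrCA mulr_gt0 // subr_gt0.
Qed.

Lemma sign_prod_zeros_seq (ys : nat -> R) m y x j : (j <= m)%N ->
  (forall i, (i < m)%N -> if (i < j)%N then ys i < x else x < ys i) -> x < y ->
  0 < (-1) ^+ (m - j).+1 * \prod_(r <- zeros_seq m ys y) (x - r).
Proof.
move=> jm hys xy.
have cmp i : (i < m)%N -> (x < ys i) = (j <= i)%N.
  by move=> /hys; case: (ltnP i j) => _ h; [rewrite lt_gtF | rewrite h].
have := @sign_prod_XsubC (zeros_seq m ys y) x.
rewrite count_zeros_seq (count_mkseq_ge jm cmp) xy addn1; apply.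
rewrite mem_rcons in_cons (lt_eqF xy) /=; apply/mapP => -[i].
by rewrite mem_iota /= => /hys; case: (ltnP i j) => _ h e; move: h; rewrite e ltxx.
Qed.

End Signs.

Section Interlacing.
Variable R : rcfType.
Implicit Types (p : {poly R}) (P zs : nat -> R).

Definition interlaces P zs n := forall j, (j < n)%N -> P j < zs j < P j.+1.

Lemma interlacing_roots p P n :
  (forall j, (j < n)%N -> P j < P j.+1) ->
  (forall j, (j < n)%N -> p.[P j] * p.[P j.+1] < 0) ->
  exists zs, interlaces P zs n /\ forall j, (j < n)%N -> root p (zs j).
Proof.
elim: n => [|n IH] Plt sgn; first by exists (fun=> 0).
have [zs [zsP zsr]] := IH (fun j hj => Plt j (ltnW hj)) (fun j hj => sgn j (ltnW hj)).
have [r rP rr] := poly_ivtoo (ltW (Plt n (ltnSn n))) (sgn n (ltnSn n)).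
rewrite in_itv /= in rP.
exists (fun j => if j == n then r else zs j).
split=> j; rewrite ltnS leq_eqVlt => /predU1P[->|jn]; rewrite ?eqxx ?ltn_eqF //.
  exact: zsP.
exact: zsr.
Qed.

Lemma interlaces_lt P zs n i j : {homo P : i j / (i <= j)%N >-> i <= j} ->
  interlaces P zs n -> (i < j < n)%N -> zs i < zs j.
Proof.
move=> Ple zsP /andP[ij jn]; have /andP[_ hi] := zsP i (ltn_trans ij jn).
have /andP[hj _] := zsP j jn.
exact: lt_trans hi (le_lt_trans (Ple _ _ ij) hj).
Qed.

Lemma uniq_zeros_seq P zs n y : {homo P : i j / (i <= j)%N >-> i <= j} ->
  interlaces P zs n -> P n <= y -> uniq (zeros_seq n zs y).
Proof.
move=> Ple zsP Pny; have zs_y i : (i < n)%N -> zs i < y.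
  by move=> hi; have /andP[_ h] := zsP i hi; exact: lt_le_trans h (le_trans (Ple _ _ hi) Pny).
rewrite /zeros_seq rcons_uniq map_inj_in_uniq ?iota_uniq ?andbT.
  by apply/mapP=> -[i]; rewrite mem_iota /= => hi e; have := zs_y i hi; rewrite -e ltxx.
move=> i j; rewrite !mem_iota /= => hi hj e.
case: (ltngtP i j) => // [ij|ji].
  by have := @interlaces_lt P zs n i j Ple zsP; rewrite ij hj e ltxx => /(_ isT).
by have := @interlaces_lt P zs n j i Ple zsP; rewrite ji hi e ltxx => /(_ isT).
Qed.

Lemma interlaced_root_unique p P zs n y (L : R) :
  {homo P : i j / (i <= j)%N >-> i <= j} -> interlaces P zs n -> P n <= y -> L != 0 ->
  p = L *: \prod_(r <- zeros_seq n zs y) ('X - r%:P) ->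
  forall j r, (j < n)%N -> P j < r < P j.+1 -> root p r -> r = zs j.
Proof.
move=> Ple zsP Pny L0 -> j r jn /andP[Pjr rPj].
rewrite rootZ // root_prod_XsubC mem_rcons in_cons => /predU1P[ry|/mapP[i]].
  by have := lt_le_trans rPj (le_trans (Ple _ _ jn) Pny); rewrite ry ltxx.
rewrite mem_iota /= => hi er; subst r; have /andP[Pi iP] := zsP i hi.
case: (ltngtP i j) => [ij|ji|-> //].
  by have := lt_le_trans iP (le_trans (Ple _ _ ij) (ltW Pjr)); rewrite ltxx.
by have := lt_le_trans rPj (le_trans (Ple _ _ ji) (ltW Pi)); rewrite ltxx.
Qed.

(* Only the zero in the cell k of t can lie on either side of t; it lies below t exactly
   when p changes sign between P k and t. *)
Lemma interlaced_threshold p P zs n k t :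
  {homo P : i j / (i <= j)%N >-> i <= j} -> interlaces P zs n -> (k < n)%N ->
  P k < t <= P k.+1 -> p.[P k] * p.[P k.+1] < 0 ->
  (forall r, P k < r < P k.+1 -> root p r -> r = zs k) ->
  forall j, (j < n)%N -> (zs j < t) = (j < k + (p.[t] * p.[P k] < 0)%R)%N.
Proof.
move=> Ple zsP kn /andP[Pkt tPk] sgn zs_unique j jn; have /andP[Pj jP] := zsP j jn.
case: (ltngtP j k) => [jk|kj|->{j jn Pj jP}].
- rewrite (lt_trans jP (le_lt_trans (Ple _ _ jk) Pkt)).
  by case: (_ < 0); rewrite /= ?addn0 ?addn1 // ltnW.
- rewrite lt_gtF; last exact: le_lt_trans (le_trans tPk (Ple _ _ kj)) Pj.
  by case: (_ < 0); rewrite /= ?addn0 ?addn1 ltnNge ?kj // ltnW.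
rewrite -[X in (X < _)%N]addn0 ltn_add2l lt0b.
have [neg|nonneg] := ltP (p.[t] * p.[P k]) 0.
  have vu : p.[P k] * p.[t] < 0 by rewrite mulrC.
  have [r] := poly_ivtoo (ltW Pkt) vu.
  rewrite in_itv /= => /andP[Pkr rt] /(zs_unique r); rewrite Pkr (lt_le_trans rt tPk) => <- //.
set u := p.[t] in nonneg *; set v := p.[P k] in sgn nonneg; set w := p.[P k.+1] in sgn.
have tPk' : t < P k.+1.
  rewrite lt_neqAle tPk andbT; apply: contraTneq sgn => e.
  by move: nonneg; rewrite /u e -/w mulrC => /le_gtF ->.
have uw : u * w <= 0 by nra.
have [r] := polyrcf.poly_ivt (ltW tPk') uw.
rewrite in_itv /= => /andP[tr rPk] rr.
have rPk' : r < P k.+1.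
  rewrite lt_neqAle rPk andbT; apply: contraTneq rr => ->.
  by rewrite rootE -/w; apply/eqP => w0; move: sgn; rewrite w0 mulr0 ltxx.
by rewrite -(zs_unique r) ?(le_gtF tr) ?(lt_le_trans Pkt tr) ?rPk'.
Qed.

End Interlacing.

Section Grid.
Variable R : realDomainType.
Variables (lo hi : R) (m : nat) (ys : nat -> R).
Hypothesis lo_hi : lo < hi.
Hypothesis ys_lt : forall i j, (i < j < m)%N -> ys i < ys j.
Hypothesis ys_range : forall i, (i < m)%N -> lo < ys i < hi.

(* lo, ys 0, ..., ys (m - 1), hi, hi, ...: monotone on all of nat. *)
Definition grid (j : nat) : R := if j is i.+1 then (if (i < m)%N then ys i else hi) else lo.

Lemma grid_lt j : (j <= m)%N -> grid j < grid j.+1.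
Proof.
case: j => [|i] /= hi_m; first by case: ltnP => // m0; case/andP: (ys_range m0).
rewrite hi_m; case: ltnP => [im|_]; first by apply: ys_lt; rewrite ltnSn.
by case/andP: (ys_range hi_m).
Qed.

Lemma grid_le : {homo grid : i j / (i <= j)%N >-> i <= j}.
Proof.
apply: homo_leq => [x|y x z|i]; [exact: lexx | exact: le_trans |].
have [im|mi] := leqP i m; first exact/ltW/grid_lt.
by case: i mi => //= i; rewrite ltnS => mi; rewrite !ltnNge mi leqW.
Qed.

Lemma grid_cell t k : (k <= m)%N -> lo < t <= hi ->
  (forall i, (i < m)%N -> (ys i < t) = (i < k)%N) -> grid k < t <= grid k.+1.
Proof.
move=> km /andP[lot thi] hys; apply/andP; split.
  by case: k km hys => [|i] //= km hys; rewrite km hys.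
by rewrite /=; case: ltnP => // km'; rewrite leNgt hys ?ltnn.
Qed.

End Grid.

Section Recurrence.
Variable R : rcfType.
Variables a b c d : R.
Local Notation W := (W a b c d).

Lemma horner_W_rec n x :
  (W n.+2).[x] = (a * x + b) * (W n.+1).[x] + (c * x + d) * (W n).[x].
Proof. by rewrite /W /= /Apoly /Bpoly !hornerE. Qed.

Lemma size_lin (u v : R) : (size (u%:P * 'X + v%:P)%R <= 2)%N.
Proof. by rewrite size_MXaddC; case: ifP => // _; rewrite ltnS size_polyC leq_b1. Qed.

Lemma size_lead_coef_W n : a != 0 ->
  size (W n.+1) = n.+2 /\ lead_coef (W n.+1) = a ^+ n.
Proof.
move=> a0; have sA : size (Apoly a b) = 2.
  by rewrite size_MXaddC polyC_eq0 (negbTE a0) size_polyC a0.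
have lA : lead_coef (Apoly a b) = a.
  rewrite lead_coefDl ?lead_coefMX ?lead_coefC // size_mulX ?polyC_eq0 //.
  by rewrite !size_polyC a0 ltnS leq_b1.
suff [] : [/\ size (W n.+1) = n.+2, lead_coef (W n.+1) = a ^+ n & (size (W n) <= n.+1)%N] by [].
elim: n => [|n [sW lW sW']]; first by rewrite /W /= size_polyX lead_coefX size_poly1.
have A0 : Apoly a b != 0 by rewrite -size_poly_eq0 sA.
have W0 : W n.+1 != 0 by rewrite -size_poly_eq0 sW.
have sAW : size (Apoly a b * W n.+1) = n.+3 by rewrite size_mul // sA sW.
have sBW : (size (Bpoly c d * W n)%R < n.+3)%N.
  apply: leq_ltn_trans (size_polyMleq _ _) _; have := size_lin c d; rewrite -/(Bpoly c d); lia.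
rewrite /W /= -/(W n.+1) -/(W n) lead_coefDl ?size_polyDl ?sAW // lead_coefM lA lW -exprS.
by rewrite sW.
Qed.

Section ClosedForms.
Variable x : R.

Lemma W_at_Delta_root : (a * x + b) ^+ 2 + 4 * (c * x + d) = 0 ->
  forall n, (W n.+1).[x] = ((a * x + b) / 2) ^+ n * (n.+1%:R * x - n%:R * ((a * x + b) / 2)).
Proof.
move=> hD; set al := (a * x + b) / 2.
have hA : a * x + b = 2 * al by rewrite /al; field.
have hB : c * x + d = - al ^+ 2 by move: hD; rewrite hA; lra.
elim/ltn_ind => -[|[|n]] IH; first by rewrite expr0 mul1r mul0r subr0 mul1r /W /= hornerX.
  by rewrite horner_W_rec hA hB /W /= hornerX hornerC expr1; ring.
rewrite horner_W_rec hA hB !IH // -!natr1 !exprS; ring.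
Qed.

Lemma W_at_g_root : (1 - a) * x ^+ 2 - (b + c) * x - d = 0 -> forall n, (W n).[x] = x ^+ n.
Proof.
move=> hg; have hB : c * x + d = x ^+ 2 - (a * x + b) * x by move: hg; lra.
elim/ltn_ind => -[|[|n]] IH; first by rewrite /W /= hornerC.
  by rewrite /W /= hornerX.
by rewrite horner_W_rec hB !IH // !exprS; ring.
Qed.

Lemma W_at_A_root : a * x + b = 0 -> forall k,
  (W k.*2).[x] = (c * x + d) ^+ k /\ (W k.*2.+1).[x] = (c * x + d) ^+ k * x.
Proof.
move=> hA; elim=> [|k [IH1 IH2]]; first by rewrite /W /= hornerC hornerX expr0 mul1r.
by rewrite doubleS !horner_W_rec IH1 IH2 hA !mul0r !add0r exprS; split; ring.
Qed.

End ClosedForms.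
End Recurrence.

Section Zeros.
Variable R : rcfType.
Variables a b c d : R.
Hypotheses (ha : a < 0) (hb : b < 0) (hd : d < 0) (hc : 0 < c) (hcm : c <= cminus a b d).

Local Notation DD := (DeltaDelta a b c d).
Local Notation Dg := (Deltag a b c d).
Local Notation xm := (xDeltam a b c d).
Local Notation xp := (xDeltap a b c d).
Local Notation gm := (xgm a b c d).
Local Notation gp := (xgp a b c d).
Local Notation xA := (xA a b).
Local Notation W := (W a b c d).

(* lra and nra ignore section hypotheses. *)
Ltac signs := have := ha; have := hb; have := hd; have := hc; move=> ? ? ? ?.

Lemma a_neq0 : a != 0. Proof. by rewrite lt_eqF. Qed.

Lemma DeltaDelta_gt0 : 0 < DD.
Proof.
have ab : 0 < a * b by signs; nra.
have abc : 0 < a * b * c by signs; nra.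
rewrite /DeltaDelta; signs; nra.
Qed.

Lemma sqr_sqrt_DeltaDelta : Num.sqrt DD ^+ 2 = DD.
Proof. by rewrite sqr_sqrtr // ltW // DeltaDelta_gt0. Qed.

Lemma Delta_factor z : (a * z + b) ^+ 2 + 4 * (c * z + d) = a ^+ 2 * ((z - xm) * (z - xp)).
Proof.
have a0 := a_neq0.
have sum : xp + xm = - (2 * a * b + 4 * c) / a ^+ 2.
  by rewrite /xDeltap /xDeltam; field; rewrite ?expf_neq0.
have prod : xp * xm = (b ^+ 2 + 4 * d) / a ^+ 2.
  rewrite /xDeltap /xDeltam mulf_div.
  have -> : (- a * b - 2 * c + 2 * Num.sqrt DD) * (- a * b - 2 * c - 2 * Num.sqrt DD)
      = (- a * b - 2 * c) ^+ 2 - 4 * Num.sqrt DD ^+ 2 by ring.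
  by rewrite sqr_sqrt_DeltaDelta /DeltaDelta; field; rewrite ?expf_neq0.
have -> : (z - xm) * (z - xp) = z ^+ 2 - (xp + xm) * z + xp * xm by ring.
by rewrite sum prod; field; rewrite ?expf_neq0.
Qed.

Lemma Delta_xDeltam : (a * xm + b) ^+ 2 + 4 * (c * xm + d) = 0.
Proof. by rewrite Delta_factor subrr mul0r mulr0. Qed.

Lemma Delta_xDeltap : (a * xp + b) ^+ 2 + 4 * (c * xp + d) = 0.
Proof. by rewrite Delta_factor subrr !mulr0. Qed.

Lemma xDeltam_le_xDeltap : xm <= xp.
Proof.
rewrite /xDeltap /xDeltam ler_pM2r ?invr_gt0 ?exprn_even_gt0 ?a_neq0 //.
have := sqrtr_ge0 DD; lra.
Qed.

Lemma b_plus_c_le : b + c <= - 2 * Num.sqrt (d * (a - 1)).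
Proof. by move: hcm; rewrite /cminus; lra. Qed.

Lemma sqr_sqrt_da : Num.sqrt (d * (a - 1)) ^+ 2 = d * (a - 1).
Proof. by rewrite sqr_sqrtr //; signs; nra. Qed.

Lemma Deltag_ge0 : 0 <= Dg.
Proof.
rewrite /Deltag; have := b_plus_c_le; have := sqr_sqrt_da.
have := sqrtr_ge0 (d * (a - 1)); signs; nra.
Qed.

Lemma sqr_sqrt_Deltag : Num.sqrt Dg ^+ 2 = Dg.
Proof. by rewrite sqr_sqrtr // Deltag_ge0. Qed.

Lemma one_sub_a_gt0 : 0 < 1 - a. Proof. signs; lra. Qed.

Lemma g_factor z : (1 - a) * z ^+ 2 - (b + c) * z - d = (1 - a) * ((z - gm) * (z - gp)).
Proof.
have a1 : 1 - a != 0 by rewrite lt0r_neq0 // one_sub_a_gt0.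
have sum : gm + gp = (b + c) / (1 - a) by rewrite /xgm /xgp; field; rewrite ?mulf_neq0.
have prod : gm * gp = - d / (1 - a).
  rewrite /xgm /xgp mulf_div.
  have -> : (b + c - Num.sqrt Dg) * (b + c + Num.sqrt Dg) = (b + c) ^+ 2 - Num.sqrt Dg ^+ 2
    by ring.
  by rewrite sqr_sqrt_Deltag /Deltag; field; rewrite ?mulf_neq0.
have -> : (z - gm) * (z - gp) = z ^+ 2 - (gm + gp) * z + gm * gp by ring.
by rewrite sum prod; field.
Qed.

Lemma g_xgm : (1 - a) * gm ^+ 2 - (b + c) * gm - d = 0.
Proof. by rewrite g_factor subrr mul0r mulr0. Qed.

Lemma g_xgp : (1 - a) * gp ^+ 2 - (b + c) * gp - d = 0.
Proof. by rewrite g_factor subrr !mulr0. Qed.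

Lemma xgm_le_xgp : gm <= gp.
Proof.
rewrite /xgm /xgp ler_pM2r ?invr_gt0 ?pmulr_rgt0 ?one_sub_a_gt0 //.
have := sqrtr_ge0 Dg; lra.
Qed.

Lemma xgp_lt0 : gp < 0.
Proof.
rewrite /xgp pmulr_llt0 ?invr_gt0 ?pmulr_rgt0 ?one_sub_a_gt0 //.
have h1 := b_plus_c_le; have h2 := sqrtr_ge0 (d * (a - 1)).
have h3 := sqr_sqrt_Deltag; have h4 := sqrtr_ge0 Dg.
have h5 : Dg < (b + c) ^+ 2 by rewrite /Deltag; signs; nra.
signs; nra.
Qed.

Lemma B_lt0 z : z <= 0 -> c * z + d < 0.
Proof. by move=> hz; signs; nra. Qed.

Lemma A_xA : a * xA + b = 0.
Proof. by rewrite /Defs.xA; have := a_neq0 => ?; field. Qed.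

Lemma xA_lt0 : xA < 0.
Proof. have := A_xA; signs; nra. Qed.

Lemma xDelta_around_xA : xm < xA < xp.
Proof.
have h1 := Delta_factor xA; rewrite A_xA expr0n /= add0r in h1.
have h2 := B_lt0 (ltW xA_lt0); have h3 : 0 < a ^+ 2 by rewrite exprn_even_gt0 ?a_neq0.
have h4 := xDeltam_le_xDeltap.
have h5 : (xA - xm) * (xA - xp) < 0 by rewrite -(pmulr_rlt0 _ h3) -h1; lra.
apply/andP; split; nra.
Qed.

Lemma xA_lt_xgm : xA < gm.
Proof.
have h1 := g_factor xA.
have h2 : 0 < (1 - a) * xA ^+ 2 - (b + c) * xA - d.
  have -> : (1 - a) * xA ^+ 2 - (b + c) * xA - d = xA ^+ 2 - (a * xA + b) * xA - (c * xA + d)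
    by ring.
  rewrite A_xA mul0r subr0; have := B_lt0 (ltW xA_lt0); have := xA_lt0; nra.
have h3 : 0 < (xA - gm) * (xA - gp) by rewrite h1 in h2; have := one_sub_a_gt0; nra.
have h4 : xA * (2 * (1 - a)) < b + c by have := A_xA; have := xA_lt0; signs; nra.
have h5 : 2 * xA < gm + gp.
  rewrite /xgm /xgp -mulrDl ltr_pdivlMr ?pmulr_rgt0 ?one_sub_a_gt0 //; lra.
have := xgm_le_xgp; nra.
Qed.

Lemma xDeltam_lt_xgm : xm < gm.
Proof. by have /andP[h1 _] := xDelta_around_xA; have := xA_lt_xgm; lra. Qed.

Lemma xDeltap_le_xgm : xp <= gm.
Proof.
rewrite leNgt; apply/negP => hlt.
have h1 : (a * gm + b) ^+ 2 + 4 * (c * gm + d) = (a * gm + b - 2 * gm) ^+ 2.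
  have -> : c * gm + d = gm ^+ 2 - (a * gm + b) * gm by move: g_xgm; lra.
  ring.
have /andP[h2 _] := xDelta_around_xA; have h3 := xA_lt_xgm.
have h4 : (gm - xm) * (gm - xp) < 0 by nra.
have : a ^+ 2 * ((gm - xm) * (gm - xp)) < 0 by rewrite pmulr_rlt0 ?exprn_even_gt0 ?a_neq0.
by rewrite -Delta_factor h1 ltNge sqr_ge0.
Qed.

Lemma xgm_lt0 : gm < 0.
Proof. by have := xgm_le_xgp; have := xgp_lt0; lra. Qed.

Lemma xDeltap_lt0 : xp < 0.
Proof. by have := xDeltap_le_xgm; have := xgm_lt0; lra. Qed.

Lemma W_xgm n : (W n).[gm] = gm ^+ n.
Proof. exact/W_at_g_root/g_xgm. Qed.

Lemma W_xgp n : (W n).[gp] = gp ^+ n.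
Proof. exact/W_at_g_root/g_xgp. Qed.

Lemma W_xDeltam_lt0 n : (W n.+1).[xm] < 0.
Proof.
have /andP[xmA _] := xDelta_around_xA; have xm0 : xm < 0 by have := xA_lt0; lra.
have al : 0 < (a * xm + b) / 2 by have := A_xA; signs; nra.
have h : n.+1%:R * xm - n%:R * ((a * xm + b) / 2) < 0.
  by have := ler0n R n; rewrite -natr1; nra.
by rewrite (W_at_Delta_root Delta_xDeltam) pmulr_rlt0 // exprn_gt0.
Qed.

Lemma W_xA_sign n : 0 < (-1) ^+ uphalf n * (W n).[xA].
Proof.
have [e1 e2] := W_at_A_root c d A_xA n./2; have hB := B_lt0 (ltW xA_lt0).
rewrite -[in W n](odd_double_half n) uphalf_half.
case: odd => /=; last by rewrite !add0n e1 sign_pow_lt0.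
rewrite !add1n e2 exprS.
have -> : -1 * (-1) ^+ n./2 * ((c * xA + d) ^+ n./2 * xA) =
          (-1) ^+ n./2 * (c * xA + d) ^+ n./2 * (- xA) by ring.
by rewrite mulr_gt0 ?sign_pow_lt0 // oppr_gt0 xA_lt0.
Qed.

Lemma W_at0_sign n : 0 < (-1) ^+ n.+3 * (W n.+2).[0].
Proof.
(* Since b^2 + 4d > 0, v grows at least geometrically with ratio -b/2. *)
pose v n := (-1) ^+ n.+1 * (W n).[0].
have rec k : v k.+2 = - b * v k.+1 + d * v k by rewrite /v horner_W_rec !exprS; ring.
have hbd : - d < b ^+ 2 / 4.
  by have := b_plus_c_le; have := sqr_sqrt_da; have := sqrtr_ge0 (d * (a - 1)); signs; nra.
suff: 0 <= v n.+1 /\ 0 < v n.+2 /\ (- b / 2) * v n.+1 <= v n.+2 by case=> _ [].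
elim: n => [|n [IH1 [IH2 IH3]]].
  rewrite /v /W /= !hornerE /= !exprS expr0.
  by split; [lra | split; signs; nra].
rewrite (rec n.+1); split; first by lra.
have h4 : 0 <= (- b / 2) * v n.+2 - (- b / 2) * v n.+1 * (- b / 2) by signs; nra.
split; signs; nra.
Qed.

Local Notation alpha := ((a * xp + b) / 2).

Lemma alpha_lt0 : alpha < 0.
Proof. have /andP[_ Axp] := xDelta_around_xA; have := A_xA; signs; nra. Qed.

Definition xp_weight (k : nat) : R := k%:R * (xp - alpha) + alpha.

Lemma W_xDeltap n : (W n.+1).[xp] = alpha ^+ n * xp_weight n.+1.
Proof. by rewrite (W_at_Delta_root Delta_xDeltap) /xp_weight -natr1; ring. Qed.

Lemma xp_weightS k : xp_weight k.+1 = xp_weight k + (xp - alpha).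
Proof. by rewrite /xp_weight -natr1; ring. Qed.

Lemma xp_weight_lt0 k : xp - alpha <= 0 -> xp_weight k < 0.
Proof. by move=> h; rewrite /xp_weight; have := ler0n R k; have := alpha_lt0; nra. Qed.

Lemma xp_weight_ge0 k : (0 <= xp_weight k) = (Dg < DD) && (nplus a b c d <= k%:R).
Proof.
have hxm : hfun a b xm < 0.
  rewrite /hfun; have /andP[xmA _] := xDelta_around_xA; have := A_xA; have := xA_lt0; signs; nra.
have hxp : hfun a b xp = 2 * (xp - alpha) by rewrite /hfun; field.
have hh : a ^+ 2 * (hfun a b xp * hfun a b xm) = - 4 * (DD - Dg).
  have a2 : 2 - a != 0 by rewrite lt0r_neq0 //; signs; lra.
  have -> : hfun a b xp * hfun a b xm =
      (2 - a) ^+ 2 * ((b / (2 - a) - xm) * (b / (2 - a) - xp)) by rewrite /hfun; field.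
  by rewrite mulrCA -Delta_factor /DeltaDelta /Deltag; field.
have Dg_lt_DD : (Dg < DD) = (0 < xp - alpha).
  have a2 : 0 < a ^+ 2 by rewrite exprn_even_gt0 ?a_neq0.
  rewrite hxp in hh; apply/idP/idP => h.
    have : a ^+ 2 * (2 * (xp - alpha) * hfun a b xm) < 0 by rewrite hh; lra.
    by rewrite pmulr_rlt0 // => h'; nra.
  have : a ^+ 2 * (2 * (xp - alpha) * hfun a b xm) < 0 by rewrite pmulr_rlt0 //; nra.
  by rewrite hh; lra.
rewrite Dg_lt_DD; have [h|h] := ltP 0 (xp - alpha); last first.
  by apply/negbTE; rewrite -ltNge; apply: xp_weight_lt0.
have hA : (Apoly a b).[xp] = 2 * alpha by rewrite /Apoly hornerD hornerMX !hornerC; field.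
rewrite /nplus hxp hA ler_pdivrMr; last by lra.
by rewrite /xp_weight; apply/idP/idP => H; lra.
Qed.

Lemma xp_weight1 : xp_weight 1 = xp.
Proof. by rewrite /xp_weight mul1r; ring. Qed.

(* The number of zeros ys below x_Delta^+: at most the largest interior zero lies in
   [x_Delta^+, x_g^-). *)
Definition xp_index (m : nat) : nat := (m - (0 <= xp_weight m.+1)%R)%N.

Lemma xp_index_step m u : 0 < (-1) ^+ (xp_index m).+1 * u ->
  (xp_index m + ((W m.+2).[xp] * u < 0)%R)%N = xp_index m.+1.
Proof.
rewrite /xp_index W_xDeltap (xp_weightS m.+1) => hu.
have hal := sign_pow_lt0 m.+1 alpha_lt0.
have pos_e : 0 <= xp_weight m.+1 -> 0 < xp - alpha /\ (0 < m)%N.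
  move=> he; split.
    by rewrite ltNge; apply: contraTN he => /(xp_weight_lt0 m.+1); rewrite -ltNge.
  by case: m {hu hal} he => //; rewrite xp_weight1 leNgt xDeltap_lt0.
set e := xp_weight m.+1 in hu pos_e *; set del := xp - alpha in pos_e *.
have [e2|e2|e2] := ltgtP (e + del) 0.
- have e1 : e < 0 by rewrite ltNge; apply/negP => he; have [] := pos_e he; lra.
  have sW : 0 < (-1) ^+ m.+2 * (alpha ^+ m.+1 * (e + del)).
    have -> : (-1) ^+ m.+2 * (alpha ^+ m.+1 * (e + del)) =
      (-1) ^+ m.+1 * alpha ^+ m.+1 * (- (e + del)) by rewrite exprS; ring.
    by rewrite mulr_gt0 // oppr_gt0.
  by rewrite (sign_mul_lt0 sW hu) (lt_geF e1) /=; lia.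
- have sW : 0 < (-1) ^+ m.+1 * (alpha ^+ m.+1 * (e + del)) by rewrite mulrA mulr_gt0.
  by rewrite (sign_mul_lt0 sW hu); case: (leP 0 e) => [/pos_e[_ m0]|_] /=; lia.
have e1 : e < 0.
  by case: (leP del 0) => [/(xp_weight_lt0 m.+1)|]; rewrite -/e; lra.
by rewrite e2 mulr0 mul0r ltxx (lt_geF e1) /=; lia.
Qed.

Record zero_config (m : nat) (ys : nat -> R) (y : R) : Prop := ZeroConfig {
  zc_lt : forall i j, (i < j < m)%N -> ys i < ys j;
  zc_range : forall i, (i < m)%N -> xm < ys i < gm;
  zc_last : gp < y <= 0;
  zc_factor : W m.+1 = a ^+ m *: \prod_(r <- zeros_seq m ys y) ('X - r%:P);
  zc_sign : forall i, (i < m)%N -> 0 < (-1) ^+ i.+1 * (W m).[ys i];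
  zc_xA : forall i, (i < m)%N -> (ys i < xA) = (i < m./2)%N;
  zc_xp : forall i, (i < m)%N -> (ys i < xp) = (i < xp_index m)%N }.

Lemma zero_config0 : zero_config 0 (fun=> 0) 0.
Proof.
split=> [i j /andP[] //|i //||| i //| i //| i //]; first by rewrite xgp_lt0 lexx.
by rewrite /zeros_seq /= big_seq1 subr0 expr0 scale1r.
Qed.

Lemma zero_config_root m ys y : zero_config m ys y ->
  forall r, r \in zeros_seq m ys y -> root (W m.+1) r.
Proof.
move=> zc r; have am := expf_neq0 m a_neq0.
by rewrite (zc_factor zc) rootZ // root_prod_XsubC.
Qed.

Section Step.
Variables (m : nat) (ys : nat -> R) (y : R).
Hypothesis zc : zero_config m ys y.

Local Notation P := (grid xm gm m ys).
Let P_lt := grid_lt xDeltam_lt_xgm (zc_lt zc) (zc_range zc).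
Let P_le := grid_le xDeltam_lt_xgm (zc_lt zc) (zc_range zc).

Lemma grid_W_sign j : (j <= m.+1)%N -> 0 < (-1) ^+ j.+1 * (W m.+2).[P j].
Proof.
(* At a zero of W_{m+1} the recurrence reduces to W_{m+2} = B W_m, and B < 0 there. *)
case: j => [_|j /=]; first by rewrite expr1 mulN1r oppr_gt0 W_xDeltam_lt0.
rewrite ltnS leq_eqVlt => /predU1P[->|jm]; first by rewrite ltnn W_xgm; exact: sign_pow_lt0 xgm_lt0.
have /andP[_ yj_gm] := zc_range zc jm.
have /rootP yj0 : root (W m.+1) (ys j).
  by apply: (zero_config_root zc); rewrite mem_rcons in_cons map_f ?orbT // mem_iota.
rewrite jm horner_W_rec yj0 mulr0 add0r exprS.
have -> : -1 * (-1) ^+ j.+1 * ((c * ys j + d) * (W m).[ys j]) =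
          - (c * ys j + d) * ((-1) ^+ j.+1 * (W m).[ys j]) by ring.
by rewrite mulr_gt0 ?(zc_sign zc) // oppr_gt0 B_lt0 // ltW // (lt_trans yj_gm xgm_lt0).
Qed.

Lemma grid_W_sign_change j : (j <= m)%N -> (W m.+2).[P j] * (W m.+2).[P j.+1] < 0.
Proof.
move=> jm; rewrite (sign_mul_lt0 (grid_W_sign (leqW jm)) (grid_W_sign (jm : (j < m.+1)%N))).
by rewrite oddD /= !negbK ?addNb ?addbN addbb.
Qed.

Lemma W_root_between_xgp_0 : exists2 y', gp < y' < 0 & root (W m.+2) y'.
Proof.
have sgp : 0 < (-1) ^+ m.+2 * (W m.+2).[gp] by rewrite W_xgp; exact: sign_pow_lt0 xgp_lt0.
have sgn : (W m.+2).[gp] * (W m.+2).[0] < 0.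
  by rewrite (sign_mul_lt0 sgp (W_at0_sign m)) oddD /= !negbK ?addNb ?addbN addbb.
have [y' hy' ry'] := poly_ivtoo (ltW xgp_lt0) sgn.
by exists y' => //; rewrite in_itv in hy'.
Qed.

Section Next.
Variables (zs : nat -> R) (y' : R).
Hypotheses (zsP : interlaces P zs m.+1) (zs_root : forall j, (j < m.+1)%N -> root (W m.+2) (zs j)).
Hypotheses (y'_range : gp < y' < 0) (y'_root : root (W m.+2) y').

Let gm_le_y' : P m.+1 <= y'.
Proof. by rewrite /= ltnn; have := xgm_le_xgp; case/andP: y'_range => h _; lra. Qed.

Lemma next_factor : W m.+2 = a ^+ m.+1 *: \prod_(r <- zeros_seq m.+1 zs y') ('X - r%:P).
Proof.
have [sW lW] := size_lead_coef_W b c d m.+1 a_neq0.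
rewrite -lW; apply: all_roots_prod_XsubC.
- by rewrite sW size_rcons size_map size_iota.
- apply/allP => r; rewrite mem_rcons in_cons => /predU1P[->//|/mapP[j]].
  by rewrite mem_iota /= => hj ->; apply: zs_root.
by rewrite uniq_rootsE (uniq_zeros_seq P_le zsP gm_le_y').
Qed.

Lemma next_root_unique j r : (j < m.+1)%N -> P j < r < P j.+1 -> root (W m.+2) r -> r = zs j.
Proof.
apply: (interlaced_root_unique P_le zsP gm_le_y' _ next_factor).
exact: expf_neq0 a_neq0.
Qed.

Lemma next_range j : (j < m.+1)%N -> xm < zs j < gm.
Proof.
move=> jm; have /andP[h1 h2] := zsP jm.
have := P_le (leq0n j); have := P_le (jm : (j.+1 <= m.+1)%N); rewrite /= ltnn.
by move=> h3 h4; rewrite (le_lt_trans h4 h1) (lt_le_trans h2 h3).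
Qed.

Lemma next_sign j : (j < m.+1)%N -> 0 < (-1) ^+ j.+1 * (W m.+1).[zs j].
Proof.
move=> jm; have /andP[Pj jP] := zsP jm.
rewrite (zc_factor zc) hornerZ horner_prod sign_scale_pow_lt0 //.
under eq_bigr do rewrite hornerXsubC.
rewrite (@sign_odd_eq _ _ (m - j).+1); last by rewrite addSn /= oddD oddB //; do 2 case: odd.
apply: sign_prod_zeros_seq => [|i im|]; first by rewrite -ltnS.
  case: ltnP => ij.
    by apply: le_lt_trans Pj; have := P_le (ij : (i.+1 <= j)%N); rewrite /= im.
  by apply: lt_le_trans jP _; have := P_le (ij : (j.+1 <= i.+1)%N); rewrite /= im.
have /andP[ygp _] := zc_last zc; have /andP[_ zg] := next_range jm.
exact: lt_trans zg (le_lt_trans xgm_le_xgp ygp).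
Qed.

Lemma next_threshold k t : (k <= m)%N -> xm < t <= gm ->
  (forall i, (i < m)%N -> (ys i < t) = (i < k)%N) ->
  forall j, (j < m.+1)%N -> (zs j < t) = (j < k + ((W m.+2).[t] * (W m.+2).[P k] < 0)%R)%N.
Proof.
move=> km ht hys; apply: (interlaced_threshold P_le zsP) => //.
- exact: grid_cell.
- exact: grid_W_sign_change.
by move=> r; apply: next_root_unique.
Qed.

Lemma next_xA j : (j < m.+1)%N -> (zs j < xA) = (j < m.+1./2)%N.
Proof.
have km : (m./2 <= m)%N by rewrite leq_half_double -addnn; exact/leqW/leq_addr.
have hA : xm < xA <= gm by have /andP[-> _] := xDelta_around_xA; rewrite (ltW xA_lt_xgm).
move=> jm; rewrite (next_threshold km hA (zc_xA zc) jm).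
rewrite (sign_mul_lt0 (W_xA_sign m.+2) (grid_W_sign (leqW km))) /= addnS /= negbK.
by rewrite [in odd _]uphalf_half -addnA addnn odd_double_half addnC -uphalf_half.
Qed.

Lemma next_xp j : (j < m.+1)%N -> (zs j < xp) = (j < xp_index m.+1)%N.
Proof.
have km : (xp_index m <= m)%N by rewrite leq_subr.
have hp : xm < xp <= gm.
  by have /andP[h1 h2] := xDelta_around_xA; rewrite xDeltap_le_xgm (lt_trans h1 h2).
move=> jm; rewrite (next_threshold km hp (zc_xp zc) jm).
by rewrite (xp_index_step (grid_W_sign (leqW km))).
Qed.

Lemma next_config : zero_config m.+1 zs y'.
Proof.
split; [move=> i j; exact: interlaces_lt P_le zsP | exact: next_range | | exact: next_factor |
        exact: next_sign | exact: next_xA | exact: next_xp].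
by case/andP: y'_range => -> /ltW.
Qed.

End Next.

Lemma zero_config_step : exists zs y', zero_config m.+1 zs y'.
Proof.
have [zs [zsP zs_root]] := interlacing_roots (n := m.+1) P_lt grid_W_sign_change.
have [y' y'_range y'_root] := W_root_between_xgp_0.
by exists zs, y'; apply: next_config.
Qed.

End Step.

Lemma zero_config_exists m : exists ys y, zero_config m ys y.
Proof.
elim: m => [|m [ys [y zc]]]; first by exists (fun=> 0), 0; exact: zero_config0.
exact: zero_config_step zc.
Qed.

Lemma inJ23_lt_xgm x : x < gm -> inJ2 a b c d x || inJ3 a b c d x = (xA < x).
Proof.
move=> xgm; rewrite /inJ2 /inJ3 xgm andbT.
case: (ltP x xp) => h; rewrite ?andbT ?orbF ?orbT //.
by have /andP[_ Ap] := xDelta_around_xA; rewrite (lt_le_trans Ap h).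
Qed.

Lemma zero_config_counts m ys y s : zero_config m ys y -> zeros_list (W m.+1) s ->
  [/\ count (inJ1 a b c d) s = m./2,
      count (fun x => inJ2 a b c d x || inJ3 a b c d x) s = m.+1./2,
      count (inJ4 a b c d) s = 1%N &
      count (inJ3 a b c d) s = (0 <= xp_weight m.+1)%R].
Proof.
move=> zc hs; have [_ lW] := size_lead_coef_W b c d m a_neq0.
have perm_s : perm_eq s (zeros_seq m ys y).
  apply: prod_XsubC_eq; apply: (scalerI (expf_neq0 m a_neq0)).
  by rewrite -(zc_factor zc) -lW -hs.
rewrite !(permP perm_s) !count_zeros_seq.
have range := zc_range zc.
have /andP[gp_y y_le0] := zc_last zc.
have gm_y : gm < y by exact: le_lt_trans xgm_le_xgp gp_y.
have /andP[xmA Axp] := xDelta_around_xA.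
have ys_neq_xA i : (i < m)%N -> ys i != xA.
  move=> im; apply: contraTneq (W_xA_sign m.+1) => <-.
  have /rootP -> : root (W m.+1) (ys i).
    by apply: (zero_config_root zc); rewrite mem_rcons in_cons map_f ?orbT // mem_iota.
  by rewrite mulr0 ltxx.
split.
- rewrite (@count_mkseq_lt _ _ _ _ m./2) ?leq_half_double -?addnn ?leqW ?leq_addr //.
    by rewrite /inJ1 (lt_gtF (lt_trans xA_lt_xgm gm_y)) andbF addn0.
  by move=> i im; rewrite /inJ1; case/andP: (range i im) => -> _; rewrite (zc_xA zc).
- rewrite (@count_mkseq_ge _ _ _ _ m./2) ?leq_half_double -?addnn ?leqW ?leq_addr //.
    rewrite /inJ2 /inJ3 (lt_gtF gm_y) (lt_gtF (le_lt_trans xDeltap_le_xgm gm_y)) !andbF addn0.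
    by rewrite -uphalfE uphalf_half -{1}(odd_double_half m) -addnn addnA addnK.
  move=> i im; case/andP: (range i im) => _ ygm; rewrite inJ23_lt_xgm //.
  by rewrite lt_neqAle eq_sym ys_neq_xA //= leNgt (zc_xA zc) // -leqNgt.
- rewrite (@count_mkseq_lt _ _ _ _ 0) // => [|i im]; first by rewrite /inJ4 gp_y y_le0.
  case/andP: (range i im) => _ ygm.
  by rewrite /inJ4 lt_gtF // (lt_le_trans ygm xgm_le_xgp).
rewrite (@count_mkseq_ge _ _ _ _ (xp_index m)) ?leq_subr // => [|i im].
  rewrite /inJ3 (lt_gtF gm_y) andbF addn0 /xp_index subKn //.
  case: (boolP (0 <= xp_weight m.+1)) => //= h; rewrite lt0n.
  by apply: contraTneq h => ->; rewrite xp_weight1 -ltNge xDeltap_lt0.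
by case/andP: (range i im) => _ ygm; rewrite /inJ3 ygm andbT leNgt (zc_xp zc) // -leqNgt.
Qed.

End Zeros.

Theorem theorem3p2 (R : rcfType) (a b c d : R)
  (ha : a < 0) (hb : b < 0) (hd : d < 0) (hc : 0 < c)
  (hcm : c <= cminus a b d) :
  forall n : nat, (1 <= n)%N ->
    real_rooted (W a b c d n) /\
    forall s : seq R, zeros_list (W a b c d n) s ->
      [/\ count (inJ1 a b c d) s = (n.-1)./2,
          count (fun x => inJ2 a b c d x || inJ3 a b c d x) s = n./2,
          count (inJ4 a b c d) s = 1%N &
          count (inJ3 a b c d) s =
            (if (DeltaDelta a b c d > Deltag a b c d) && (nplus a b c d <= n%:R)
             then 1%N else 0%N)].
Proof.
case=> [|m] // _; have [ys [y zc]] := zero_config_exists ha hb hd hc hcm m.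
have [_ lead_W] := size_lead_coef_W b c d m (ltr0_neq0 ha).
split=> [|s hs].
  by exists (zeros_seq m ys y); rewrite /zeros_list lead_W -(zc_factor zc).
have [-> -> -> ->] := zero_config_counts ha hb hd hc hcm zc hs.
by rewrite (xp_weight_ge0 ha hb hd hc).
Qed.
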